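(* Let $n,g$ be integers with $0\leq g\leq \lfloor \frac{n-3}{2}\rfloor$, and let $G$ be a connected graph of order $n$. Then $G$ has an $R_g$-cutset with $\kappa_g(G)=2$ if and only if one of the following holds: (1) $\kappa(G)=2$ and there exist two vertices $u,v$ such that $G-\{u,v\}$ is disconnected and every connected component of $G-\{u,v\}$ has at least $g+1$ vertices; (2) $\kappa(G)=1$, $g\geq 1$, and both (a) for every cut vertex $u$ of $G$, some connected component of $G-u$ has at most $g$ vertices, and (b) either there exists a cut vertex $v$ such that $G-v$ has at least $3$ connected components, one of which consists of a single vertex and each of the others has at least $g+1$ vertices; or there exist two vertices $x,y$, neither of which is a cut vertex of $G$, such that $G-\{x,y\}$ is disconnected and every connected component of $G-\{x,y\}$ has at least $g+1$ vertices.
   Context: All graphs are finite and simple. $\kappa(G)$ denotes the usual vertex connectivity. A cut vertex of a connected graph $G$ is a vertex $v$ with $G-v$ disconnected. A set $S\subseteq V(G)$ is a cutset if $G-S$ is disconnected. For a non-negative integer $g$, a cutset $S$ is an $R_g$-cutset if every connected component of $G-S$ has at least $g+1$ vertices. If $G$ has at least one $R_g$-cutset, the $g$-extra connectivity $\kappa_g(G)$ is the minimum cardinality of an $R_g$-cutset of $G$. *)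

(* A simple graph is a symmetric irreflexive relation e on a finType T. *)
From mathcomp Require Import all_boot.
Set Implicit Arguments. Unset Strict Implicit. Unset Printing Implicit Defensive.

Section Graphs.
Variables (T : finType) (e : rel T).

Definition del_rel (S : {set T}) : rel T :=
  [rel a b | [&& a \notin S, b \notin S & e a b]].

Definition connected_graph : Prop := forall x y : T, connect e x y.

Definition cutset (S : {set T}) : bool :=
  [exists x, exists y, [&& x \notin S, y \notin S & ~~ connect (del_rel S) x y]].

Definition comp (S : {set T}) (x : T) : {set T} :=
  [set y | (y \notin S) && connect (del_rel S) x y].

Definition comps (S : {set T}) : {set {set T}} :=
  [set comp S x | x in ~: S].

Definition Rg_cutset (g : nat) (S : {set T}) : bool :=
  cutset S && [forall x, (x \notin S) ==> (g.+1 <= #|comp S x|)].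

(* vertex connectivity: minimum size of a cutset, or |V|-1 if there is none
   (complete graph) *)
Definition kappa : nat := \big[minn/#|T|.-1]_(S : {set T} | cutset S) #|S|.

(* g-extra connectivity: minimum size of an R_g-cutset (meaningful only when one
   exists; the default #|T| is never below the size of an actual cutset) *)
Definition kappa_g (g : nat) : nat :=
  \big[minn/#|T|]_(S : {set T} | Rg_cutset g S) #|S|.

Definition cut_vertex (v : T) : bool := cutset [set v].

End Graphs.

(* The proof describes R_g-cutsets through the set [comps e S] of components
   of G - S: S is a cutset iff G - S has at least two components, and an
   R_g-cutset iff moreover all of them have more than g vertices.  The key
   observation concerns a vertex v isolated in G - S (its component is {v}):
   the components of G - (S + v) are then those of G - S except {v}.
   Conversely, if S + v is an R_g-cutset while G - S has a component of size
   <= g, then v must be isolated in G - S.  For S = {u} this identifies the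
   R_g-cutsets {u, v} through a cut vertex u with the "pendant splits" of
   condition (2)(b).  The theorem then follows by a short case
   analysis on kappa, which lies in {1, 2}. *)

From Pilot Require Import Defs.
From mathcomp Require Import all_boot all_order zify.
Import Order.TTheory.
Set Implicit Arguments. Unset Strict Implicit. Unset Printing Implicit Defensive.

(* Let [comp] denote the component of G - S, not function composition. *)
Import Defs.

Lemma connect_restrict (T : finType) (e1 e2 : rel T) x y :
  (forall a b, connect e1 x a -> e1 a b -> e2 a b) ->
  connect e1 x y -> connect e2 x y.
Proof.
move=> sub_e /connectP[p p_e ->].
elim: p x p_e sub_e => [|b p IHp] a //= /andP[e_ab p_e] sub_e.
apply: connect_trans (connect1 (sub_e a b (connect0 _ _) e_ab)) _.
apply: IHp p_e _ => c d c_bc e_cd.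
by apply: sub_e e_cd; apply: connect_trans c_bc; apply: connect1.
Qed.

Section Components.
Variables (T : finType) (e : rel T).
Hypothesis e_sym : symmetric e.
Implicit Types (S : {set T}) (C : {set T}) (v x y z : T).

Lemma del_rel_sym S : symmetric (del_rel e S).
Proof. by move=> a b; rewrite /del_rel /= e_sym andbCA. Qed.

Lemma connect_del_sym S : connect_sym (del_rel e S).
Proof. exact: sym_connect_sym (del_rel_sym S). Qed.

Lemma connect_del_subset S S' x y : S \subset S' ->
  connect (del_rel e S') x y -> connect (del_rel e S) x y.
Proof.
move=> sSS'; apply: connect_sub => a b /= /and3P[aS' bS' e_ab]; apply: connect1.
by rewrite /del_rel /= e_ab !(contra (subsetP sSS' _)).
Qed.

Lemma comp_self S x : x \notin S -> x \in comp e S x.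
Proof. by move=> xS; rewrite inE xS connect0. Qed.

Lemma comp_eq S x y : y \in comp e S x -> comp e S y = comp e S x.
Proof.
rewrite inE => /andP[_ c_xy]; apply/setP => z; rewrite !inE.
case: (z \in S) => //=; apply/idP/idP; first exact: connect_trans.
by apply: connect_trans; rewrite connect_del_sym.
Qed.

Lemma comp_in_comps S x : x \notin S -> comp e S x \in comps e S.
Proof. by move=> xS; apply: imset_f; rewrite in_setC. Qed.

Lemma comp_add_unreachable S v y : v \notin comp e S y ->
  comp e (S :|: [set v]) y = comp e S y.
Proof.
move=> vNy; apply/setP => z; apply/idP/idP; rewrite !inE.
  case/andP; rewrite negb_or => /andP[-> _] /=.
  by apply: connect_del_subset; rewrite subsetUl.
case/andP=> zS c_yz; rewrite negb_or zS /=.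
have zv : z != v by apply: contraNneq vNy => <-; rewrite inE zS.
rewrite zv /=; apply: connect_restrict c_yz => a b c_ya /= /and3P[aS bS e_ab].
have c_yb : connect (del_rel e S) y b.
  by apply: connect_trans c_ya (connect1 _); rewrite /del_rel /= aS bS.
rewrite /del_rel /= !inE !negb_or aS bS e_ab /= andbT.
by apply/andP; split; apply: contraNneq vNy => <-; rewrite inE ?aS ?bS.
Qed.

Lemma cutset_comps S : cutset e S = (1 < #|comps e S|).
Proof.
apply/existsP/card_gt1P => [[x /existsP[y /and3P[xS yS Nxy]]] |].
  exists (comp e S x), (comp e S y); rewrite !comp_in_comps //; split=> //.
  by apply: contraNneq Nxy => Exy; have := comp_self yS; rewrite -Exy inE => /andP[].
case=> _ [_ [/imsetP[x + ->] /imsetP[y + ->] Nxy]]; rewrite !in_setC => xS yS.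
exists x; apply/existsP; exists y; rewrite xS yS /=.
by apply: contra Nxy => c_xy; rewrite (@comp_eq S x y) ?inE ?yS.
Qed.

Lemma Rg_cutsetP g S :
  Rg_cutset e g S <-> 1 < #|comps e S| /\ forall C, C \in comps e S -> g < #|C|.
Proof.
rewrite /Rg_cutset cutset_comps; split.
  case/andP=> -> /forallP big; split=> // _ /imsetP[x xS ->].
  by apply: (implyP (big x)); rewrite -in_setC.
case=> -> big; apply/forallP => x; apply/implyP => xS.
exact/big/comp_in_comps.
Qed.

(* Components are nonempty, so every cutset is an R_0-cutset. *)
Lemma cutset_Rg0 S : cutset e S -> Rg_cutset e 0 S.
Proof.
move=> cutS; apply/andP; split=> //; apply/forallP => x; apply/implyP => xS.
by rewrite card_gt0; apply/set0Pn; exists x; exact: comp_self.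
Qed.

Lemma small_comp_or_Rg g S : cutset e S ->
  (exists2 C, C \in comps e S & #|C| <= g) \/ Rg_cutset e g S.
Proof.
move=> cutS.
have [/existsP[C /andP[CS small]] | Nsmall] :=
  boolP [exists C in comps e S, #|C| <= g]; first by left; exists C.
right; apply/Rg_cutsetP; rewrite -cutset_comps; split=> // C CS.
by rewrite ltnNge; apply: contra Nsmall => small; apply/existsP; exists C; rewrite CS.
Qed.

(* Below, [comp e S v = [set v]] says that v is an isolated vertex of G - S. *)
Lemma isolated_notin S v : comp e S v = [set v] -> v \notin S.
Proof. by move=> Ev; have := set11 v; rewrite -Ev inE => /andP[]. Qed.

Lemma comp_add_isolated S v z : comp e S v = [set v] -> z \notin S -> z != v ->
  comp e (S :|: [set v]) z = comp e S z /\ comp e S z != [set v].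
Proof.
move=> Ev zS zv.
have Ez : comp e S z != [set v].
  by apply: contraNneq zv => Ez; have := comp_self zS; rewrite Ez in_set1.
split=> //; apply: comp_add_unreachable; apply: contra Ez => vz.
by rewrite -(comp_eq vz) Ev.
Qed.

Lemma comps_add_isolated S v : comp e S v = [set v] ->
  comps e (S :|: [set v]) = comps e S :\ [set v].
Proof.
move=> Ev; apply/setP => C; rewrite in_setD1; apply/imsetP/andP.
  case=> z; rewrite in_setC in_setU negb_or in_set1 => /andP[zS zv] ->.
  by have [-> ?] := comp_add_isolated Ev zS zv; split=> //; exact: comp_in_comps.
case=> CNv /imsetP[z]; rewrite in_setC => zS CE.
have zv : z != v by apply: contraNneq CNv => zv; rewrite CE zv Ev.
exists z; first by rewrite in_setC in_setU negb_or in_set1 zS zv.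
by have [-> _] := comp_add_isolated Ev zS zv.
Qed.

Lemma Rg_cutset_add_isolated g S v : comp e S v = [set v] ->
  Rg_cutset e g (S :|: [set v]) <->
  2 < #|comps e S| /\ forall C, C \in comps e S -> C != [set v] -> g < #|C|.
Proof.
move=> Ev; have vS : [set v] \in comps e S.
  by rewrite -Ev comp_in_comps ?isolated_notin.
have cardS : #|comps e S| = #|comps e S :\ [set v]|.+1.
  by rewrite (cardsD1 [set v]) vS.
split.
  case/Rg_cutsetP; rewrite comps_add_isolated // => two big.
  split=> [|C CS CNv]; first by rewrite cardS ltnS.
  by apply: big; rewrite in_setD1 CNv.
case=> three big; apply/Rg_cutsetP; rewrite comps_add_isolated //.
split=> [|C]; first by rewrite -ltnS -cardS.
by rewrite in_setD1 => /andP[CNv CS]; apply: big.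
Qed.

(* If S + v is an R_g-cutset but G - S has a component C of size <= g, then v
   is isolated in G - S: v lies in C (otherwise C survives in G - (S + v)),
   and any further vertex of C would bring a whole component of G - (S + v),
   of size > g, together with v into C. *)
Lemma small_comp_isolated g S v C : Rg_cutset e g (S :|: [set v]) ->
  C \in comps e S -> #|C| <= g -> comp e S v = [set v].
Proof.
case/Rg_cutsetP=> _ big /imsetP[x]; rewrite in_setC => xS -> small.
have vx : v \in comp e S x.
  apply: contraTT small => vNx; rewrite -ltnNge -(comp_add_unreachable vNx).
  have xv : x != v by apply: contraNneq vNx => <-; exact: comp_self.
  by apply/big/comp_in_comps; rewrite in_setU negb_or in_set1 xS xv.
have vS : v \notin S by move: vx; rewrite inE => /andP[].
apply/eqP; rewrite eqEsubset sub1set comp_self // andbT.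
apply/subsetP => y yv; rewrite in_set1; apply/negPn/negP => yNv.
have yS : y \notin S by move: yv; rewrite inE => /andP[].
have ySv : y \notin S :|: [set v] by rewrite in_setU negb_or in_set1 yS yNv.
have sub : v |: comp e (S :|: [set v]) y \subset comp e S x.
  rewrite subUset sub1set vx /= -(comp_eq vx).
  apply/subsetP => z; rewrite !inE negb_or => /andP[/andP[zS _] c_yz].
  rewrite zS /=; move: yv; rewrite inE => /andP[_ c_vy].
  by apply: connect_trans c_vy _; apply: connect_del_subset c_yz; rewrite subsetUl.
have vN : v \notin comp e (S :|: [set v]) y by rewrite !inE eqxx orbT.
have := subset_leq_card sub; rewrite cardsU1 vN.
have := big _ (comp_in_comps ySv); lia.
Qed.

Definition pendant_split g v : Prop :=
  3 <= #|comps e [set v]| /\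
  exists2 C, C \in comps e [set v] &
    #|C| = 1 /\ forall C', C' \in comps e [set v] -> C' != C -> g.+1 <= #|C'|.

Lemma Rg_pair_pendant g u v : Rg_cutset e g [set u; v] ->
  (exists2 C, C \in comps e [set u] & #|C| <= g) -> pendant_split g u.
Proof.
move=> Ruv [C CS small]; have Ev := small_comp_isolated Ruv CS small.
have [three big] := (Rg_cutset_add_isolated g Ev).1 Ruv.
split=> //; exists [set v]; first by rewrite -Ev comp_in_comps ?isolated_notin.
by split=> [|C' C'S]; [rewrite cards1 | apply: big].
Qed.

Lemma pendant_Rg_pair g v : pendant_split g v ->
  exists x, v != x /\ Rg_cutset e g [set v; x].
Proof.
case=> three [C /imsetP[x]]; rewrite in_setC in_set1 => xv -> [one big].
have Ex : comp e [set v] x = [set x].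
  by apply/esym/eqP; rewrite eqEcard sub1set comp_self ?in_set1 // cards1 one.
exists x; split; first by rewrite eq_sym.
apply/(Rg_cutset_add_isolated g Ex); split=> // D DS; rewrite -Ex; exact: big.
Qed.

Lemma Rg_pair_cases g u v : u != v -> Rg_cutset e g [set u; v] ->
  (forall w, cut_vertex e w -> exists2 C, C \in comps e [set w] & #|C| <= g) ->
  (exists w, cut_vertex e w /\ pendant_split g w) \/
  (exists x y, x != y /\ ~~ cut_vertex e x /\ ~~ cut_vertex e y /\
                 Rg_cutset e g [set x; y]).
Proof.
move=> uv RS small.
have [cu|Ncu] := boolP (cut_vertex e u).
  by left; exists u; split=> //; apply: Rg_pair_pendant RS (small u cu).
have [cv|Ncv] := boolP (cut_vertex e v); last by right; exists u, v.
have RS' : Rg_cutset e g [set v; u] by rewrite setUC.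
by left; exists v; split=> //; apply: Rg_pair_pendant RS' (small v cv).
Qed.

End Components.

Section Connectivity.
Variables (T : finType) (e : rel T).
Implicit Types (S : {set T}) (g : nat).

Lemma cutset_proper S : cutset e S -> #|S| < #|T|.
Proof.
case/existsP=> x /existsP[y /and3P[xS _ _]].
rewrite -(cardsC S) -[X in X < _]addn0 ltn_add2l card_gt0.
by apply/set0Pn; exists x; rewrite in_setC.
Qed.

Lemma kappa_le S : cutset e S -> kappa e <= #|S|.
Proof. exact: (@bigmin_le_cond _ nat _ _ S). Qed.

Lemma kappa_attained S0 : cutset e S0 -> exists2 S, cutset e S & #|S| = kappa e.
Proof.
move=> cutS0.
have [|S cutS E] := @eq_bigmin _ nat _ #|T|.-1 S0 (cutset e) (fun S => #|S|) cutS0.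
  by move=> S /cutset_proper; lia.
by exists S => //; apply: esym E.
Qed.

Lemma kappa_g_le g S : Rg_cutset e g S -> kappa_g e g <= #|S|.
Proof. exact: (@bigmin_le_cond _ nat _ _ S). Qed.

Lemma kappa_g_attained g S0 : Rg_cutset e g S0 ->
  exists2 S, Rg_cutset e g S & #|S| = kappa_g e g.
Proof.
move=> RS0.
have [|S RS E] := @eq_bigmin _ nat _ #|T| S0 (Rg_cutset e g) (fun S => #|S|) RS0.
  by move=> S _; apply: max_card.
by exists S => //; apply: esym E.
Qed.

Lemma kappa_g_eq g k : (exists2 S, Rg_cutset e g S & #|S| = k) ->
  (forall S, Rg_cutset e g S -> k <= #|S|) -> kappa_g e g = k.
Proof.
case=> S RS <- lower; apply/anti_leq; rewrite kappa_g_le //=.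
by apply/(@bigmin_geP _ nat); split=> //; apply: max_card.
Qed.

Hypothesis hconn : connected_graph e.

Lemma cutset_nonempty S : cutset e S -> 0 < #|S|.
Proof.
rewrite card_gt0; apply: contraTneq => ->.
apply/negP => /existsP[x /existsP[y /and3P[_ _]]]; apply/negP/negPn.
by apply: connect_sub (hconn x y) => a b e_ab; apply: connect1; rewrite /del_rel /= !inE.
Qed.

Lemma kappa_gt0 : 1 < #|T| -> 0 < kappa e.
Proof.
move=> T2; have T1 : 0 < #|T|.-1 by lia.
by apply/(@bigmin_geP _ nat); split=> // S; exact: cutset_nonempty.
Qed.

Hypothesis e_sym : symmetric e.

Lemma Rg_cutset_ge2P g :
  (forall u, cut_vertex e u -> exists2 C, C \in comps e [set u] & #|C| <= g) <->
  (forall S, Rg_cutset e g S -> 1 < #|S|).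
Proof.
split=> [small S RS | ge2 u /(small_comp_or_Rg e_sym g)[// | /ge2]]; last first.
  by rewrite cards1.
have cutS : cutset e S by case/andP: RS.
rewrite ltn_neqAle cutset_nonempty // andbT eq_sym; apply/negP => /cards1P[u Su].
move: RS cutS; rewrite Su => RS /small[C CS Csmall].
by case/(Rg_cutsetP e_sym): RS => _ /(_ C CS); rewrite ltnNge Csmall.
Qed.

End Connectivity.

Theorem theorem4p1 (T : finType) (e : rel T)
  (e_sym : symmetric e) (e_irr : irreflexive e)
  (n g : nat) (hn : #|T| = n) (hn3 : 3 <= n) (hg : g <= (n - 3)./2)
  (hconn : connected_graph e) :
  ((exists S : {set T}, Rg_cutset e g S) /\ kappa_g e g = 2)
  <->
  ( (kappa e = 2 /\
       exists u v : T, u != v /\ Rg_cutset e g [set u; v])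
    \/
    (kappa e = 1 /\ 1 <= g /\
       (forall u : T, cut_vertex e u ->
          exists2 C, C \in comps e [set u] & #|C| <= g) /\
       ((exists v : T, cut_vertex e v /\ 3 <= #|comps e [set v]| /\
           exists2 C, C \in comps e [set v] &
             #|C| = 1 /\
             forall C', C' \in comps e [set v] -> C' != C -> g.+1 <= #|C'|)
        \/
        (exists x y : T, x != y /\ ~~ cut_vertex e x /\ ~~ cut_vertex e y /\
           Rg_cutset e g [set x; y])))).
Proof.
have kappa_pos : 0 < kappa e by apply: kappa_gt0; rewrite // hn; lia.
split.
- case=> [[S0 RS0] kg2].
  have Rg_ge2 S : Rg_cutset e g S -> 1 < #|S| by rewrite -kg2; apply: kappa_g_le.
  have [S RS] := kappa_g_attained RS0; rewrite kg2 => /eqP/cards2P[u [v [uv ES]]].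
  subst S; have cut_uv : cutset e [set u; v] by case/andP: RS.
  have [k1|k2] : kappa e = 1 \/ kappa e = 2.
    by have := kappa_le cut_uv; rewrite cards2 uv; lia.
  2: by left; split=> //; exists u, v.
  have small := (Rg_cutset_ge2P hconn e_sym g).2 Rg_ge2.
  right; split=> //; split; last by split=> //; exact: Rg_pair_cases RS small.
  have [S1 cut_S1] := kappa_attained cut_uv; rewrite k1 => /eqP/cards1P[w ES1].
  case: g {hg RS0 kg2 RS small} Rg_ge2 => // Rg0_ge2.
  by have := Rg0_ge2 _ (cutset_Rg0 cut_S1); rewrite ES1 cards1.
- case=> [[k2 [u [v [uv RS]]]] | [k1 [g1 [small pendant]]]].
    split; first by exists [set u; v].
    apply: kappa_g_eq; first by exists [set u; v]; rewrite // cards2 uv.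
    by move=> S /andP[cutS _]; rewrite -k2; apply: kappa_le.
  have [S RS S2] : exists2 S, Rg_cutset e g S & #|S| = 2.
    case: pendant => [[v [_ /(pendant_Rg_pair e_sym)[x [vx RS]]]] | [x [y [xy [_ [_ RS]]]]]].
      by exists [set v; x]; rewrite ?cards2 ?vx.
    by exists [set x; y]; rewrite ?cards2 ?xy.
  split; first by exists S.
  by apply: kappa_g_eq; [exists S | apply/(Rg_cutset_ge2P hconn e_sym)].
Qed.
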